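(* Order each hom-set $\mathbf{qPOS}((\mathcal X,R),(\mathcal Y,S))$ by $F\sqsubseteq G$ iff $G\le S\circ F$. Then this is a partial order on each hom-set, and composition is monotone in both arguments: if $F,F':(\mathcal X,R)\to(\mathcal Y,S)$ and $G,G':(\mathcal Y,S)\to(\mathcal Z,T)$ are monotone functions with $F\sqsubseteq F'$ and $G\sqsubseteq G'$, then $G\circ F\sqsubseteq G'\circ F'$. Thus $\mathbf{qPOS}$ is enriched over the category of posets.
   Context: A quantum set $\mathcal X$ is a set $\mathrm{At}(\mathcal X)$ of nonzero finite-dimensional Hilbert spaces (atoms). A relation $R$ from $\mathcal X$ to $\mathcal Y$ is a choice of subspaces $R(X,Y)\subseteq L(X,Y)$ for all atoms $X\in\mathrm{At}(\mathcal X)$, $Y\in\mathrm{At}(\mathcal Y)$. Composition: $(S\circ R)(X,Z)=\mathrm{span}\{sr: r\in R(X,Y), s\in S(Y,Z), Y\in\mathrm{At}(\mathcal Y)\}$; identity $I_{\mathcal X}(X,X)=\mathbb C 1_X$, $I_{\mathcal X}(X,X')=0$ for $X\neq X'$; adjoint $R^\dagger(Y,X)=\{r^\dagger: r\in R(X,Y)\}$; $R\le S$ iff $R(X,Y)\subseteq S(X,Y)$ for all atoms; $\wedge$ is entrywise intersection. A function $F:\mathcal X\to\mathcal Y$ is a relation with $F\circ F^\dagger\le I_{\mathcal Y}$ and $F^\dagger\circ F\ge I_{\mathcal X}$. A quantum poset is $(\mathcal X,R)$ with $I_{\mathcal X}\le R$, $R\circ R\le R$, $R\wedge R^\dagger\le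 I_{\mathcal X}$. A monotone map $F:(\mathcal X,R)\to(\mathcal Y,S)$ is a function $F:\mathcal X\to\mathcal Y$ with $F\circ R\le S\circ F$. $\mathbf{qPOS}$ is the category of quantum posets and monotone maps. *)

From HB Require Import structures.
From mathcomp Require Import all_boot all_order all_algebra.
Set Implicit Arguments. Unset Strict Implicit. Unset Printing Implicit Defensive.
Import Order.TTheory GRing.Theory Num.Theory.
Local Open Scope ring_scope.

(* A quantum set: a collection of atoms, each atom being a nonzero
   finite-dimensional Hilbert space, represented as C^(qdim x). *)
Record qset := QSet {
  qatom :> Type;
  qdim : qatom -> nat;
  qdim_gt0 : forall x, (0 < qdim x)%N }.

Section QRel.
Variable C : numClosedFieldType.

(* L(X,Y) = linear maps X -> Y = (dim Y) x (dim X) matrices. *)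
Definition qhom (X Y : qset) (x : X) (y : Y) := 'M[C]_(qdim y, qdim x).

(* A relation: for each pair of atoms a set of maps (required to be a subspace). *)
Definition qrel (X Y : qset) := forall (x : X) (y : Y), qhom x y -> Prop.

Definition is_subspace (m n : nat) (P : 'M[C]_(m, n) -> Prop) :=
  P 0 /\ forall (a : C) u v, P u -> P v -> P (a *: u + v).

Definition is_qrel (X Y : qset) (R : qrel X Y) :=
  forall x y, is_subspace (R x y).

(* Composition: (S o R)(x,z) = span { s r : r in R(x,y), s in S(y,z), y atom }. *)
Definition qcomp (X Y Z : qset) (S : qrel Y Z) (R : qrel X Y) : qrel X Z :=
  fun x z m => exists (n : nat) (y : 'I_n -> Y) (c : 'I_n -> C)
    (r : forall i, qhom x (y i)) (s : forall i, qhom (y i) z),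
    (forall i, R x (y i) (r i) /\ S (y i) z (s i)) /\
    m = \sum_(i < n) c i *: (s i *m r i).

Definition qid (X : qset) : qrel X X :=
  fun x x' m => (x = x' -> exists c : C, m = c *: pid_mx (qdim x)) /\ (x <> x' -> m = 0).

Arguments qid X : clear implicits.

Definition hadj (m n : nat) (A : 'M[C]_(m, n)) : 'M[C]_(n, m) :=
  map_mx (fun a => a^*) A^T.

Definition qadj (X Y : qset) (R : qrel X Y) : qrel Y X :=
  fun y x m => exists r, R x y r /\ m = hadj r.

Definition qle (X Y : qset) (R S : qrel X Y) :=
  forall x y m, R x y m -> S x y m.

Definition qmeet (X Y : qset) (R S : qrel X Y) : qrel X Y :=
  fun x y m => R x y m /\ S x y m.

Definition is_qfun (X Y : qset) (F : qrel X Y) :=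
  [/\ is_qrel F, qle (qcomp F (qadj F)) (qid Y) & qle (qid X) (qcomp (qadj F) F)].

Definition is_qposet (X : qset) (R : qrel X X) :=
  [/\ is_qrel R, qle (qid X) R, qle (qcomp R R) R & qle (qmeet R (qadj R)) (qid X)].

Definition is_monotone (X Y : qset) (R : qrel X X) (S : qrel Y Y) (F : qrel X Y) :=
  is_qfun F /\ qle (qcomp F R) (qcomp S F).

Definition hom_le (X Y : qset) (S : qrel Y Y) (F G : qrel X Y) :=
  qle G (qcomp S F).

End QRel.

From mathcomp Require Import all_boot all_order all_algebra.
From Stdlib Require Import Classical FunctionalExtensionality PropExtensionality.
Set Implicit Arguments. Unset Strict Implicit. Unset Printing Implicit Defensive.
Import GRing.Theory Num.Theory.
Local Open Scope ring_scope.

(* The enrichment of qPOS over posets is pure relation calculus.  The key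
   tool is an induction principle for composites: a subspace containing all
   products s r (r in R, s in S) contains S o R.
   The four clauses of the theorem then follow:
   - reflexivity from I <= S,
   - transitivity from S o S <= S,
   - monotonicity of composition from G o S <= T o G and T o T <= T,
   - antisymmetry: if G <= S o F and F <= S o G then G o F^+ lands in
     S /\ S^+ <= I, hence G <= G o F^+ o F <= F (using I <= F^+ o F); by
     symmetry F = G. *)

Section QuantumRelations.
Variable C : numClosedFieldType.

Lemma subspace_lincomb (m n : nat) (P : 'M[C]_(m, n) -> Prop) :
  is_subspace P -> forall k (c : 'I_k -> C) (f : 'I_k -> 'M[C]_(m, n)),
  (forall i, P (f i)) -> P (\sum_(i < k) c i *: f i).
Proof.
move=> [P0 PD]; elim=> [|k IH] c f Pf; first by rewrite big_ord0.
by rewrite big_ord_recr /= addrC; apply: PD; [exact: Pf | exact: IH].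
Qed.

Definition cat_fam n1 n2 (A : Type) (f1 : 'I_n1 -> A) (f2 : 'I_n2 -> A) :
  'I_(n1 + n2) -> A :=
  fun i => match split i with inl j => f1 j | inr j => f2 j end.

Definition cat_dfam n1 n2 (A : Type) (B : A -> Type)
  (f1 : 'I_n1 -> A) (f2 : 'I_n2 -> A)
  (g1 : forall i, B (f1 i)) (g2 : forall i, B (f2 i)) :
  forall i, B (cat_fam f1 f2 i) :=
  fun i => match split i as s
             return B (match s with inl j => f1 j | inr j => f2 j end)
           with inl j => g1 j | inr j => g2 j end.

Lemma qcomp_is_subspace (X Y Z : qset) (S : qrel C Y Z) (R : qrel C X Y) x z :
  is_subspace (@qcomp C X Y Z S R x z).
Proof.
split.
  have y0 : 'I_0 -> Y by case.
  exists 0%N, y0, (fun _ => 0), (fun _ => 0), (fun _ => 0).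
  by split; [case | rewrite big_ord0].
move=> a u v [n1 [y1 [c1 [r1 [s1 [RS1 ->]]]]]] [n2 [y2 [c2 [r2 [s2 [RS2 ->]]]]]].
exists (n1 + n2)%N, (cat_fam y1 y2), (cat_fam (fun i => a * c1 i) c2),
  (cat_dfam (B := fun y => qhom C x y) r1 r2),
  (cat_dfam (B := fun y => qhom C y z) s1 s2).
split; first by move=> i; rewrite /cat_fam /cat_dfam; case: (split i).
rewrite big_split_ord /= scaler_sumr; congr (_ + _); apply: eq_bigr => i _.
  rewrite /cat_fam /cat_dfam.
  by have -> : split (lshift n2 i) = inl i := unsplitK (inl i); rewrite scalerA.
rewrite /cat_fam /cat_dfam.
by have -> : split (rshift n1 i) = inr i := unsplitK (inr i).
Qed.

Lemma qcomp_mul (X Y Z : qset) (S : qrel C Y Z) (R : qrel C X Y) x y z r s :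
  R x y r -> S y z s -> qcomp S R (s *m r).
Proof.
move=> Rr Ss; exists 1%N, (fun _ => y), (fun _ => 1), (fun _ => r), (fun _ => s).
by split; [| rewrite big_ord1 scale1r].
Qed.

Lemma qcomp_ind (X Y Z : qset) (S : qrel C Y Z) (R : qrel C X Y) x z
  (P : qhom C x z -> Prop) : is_subspace P ->
  (forall y r s, R x y r -> S y z s -> P (s *m r)) ->
  forall m : qhom C x z, qcomp S R m -> P m.
Proof.
move=> subP Pmul m [n [y [c [r [s [RS ->]]]]]].
by apply: subspace_lincomb => // i; have [? ?] := RS i; exact: Pmul.
Qed.

Lemma subspace_mulr (m n p : nat) (P : 'M[C]_(m, p) -> Prop) (c : 'M[C]_(n, p)) :
  is_subspace P -> is_subspace (fun w : 'M[C]_(m, n) => P (w *m c)).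
Proof.
move=> [P0 PD]; split; first by rewrite mul0mx.
by move=> a u v Pu Pv; rewrite mulmxDl -scalemxAl; apply: PD.
Qed.

Lemma subspace_mull (m n p : nat) (P : 'M[C]_(m, p) -> Prop) (c : 'M[C]_(m, n)) :
  is_subspace P -> is_subspace (fun w : 'M[C]_(n, p) => P (c *m w)).
Proof.
move=> [P0 PD]; split; first by rewrite mulmx0.
by move=> a u v Pu Pv; rewrite mulmxDr -scalemxAr; apply: PD.
Qed.

Lemma hadjK (m n : nat) (A : 'M[C]_(m, n)) : hadj (hadj A) = A.
Proof. by apply/matrixP => i j; rewrite !mxE conjCK. Qed.

Lemma hadjM (m n p : nat) (A : 'M[C]_(m, n)) (B : 'M[C]_(n, p)) :
  hadj (A *m B) = hadj B *m hadj A.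
Proof.
apply/matrixP => i j; rewrite !mxE rmorph_sum; apply: eq_bigr => k _.
by rewrite !mxE rmorphM mulrC.
Qed.

Lemma subspace_hadj (m n : nat) (P : 'M[C]_(n, m) -> Prop) :
  is_subspace P -> is_subspace (fun w : 'M[C]_(m, n) => P (hadj w)).
Proof.
move=> [P0 PD]; split.
  by have -> : hadj (0 : 'M[C]_(m, n)) = 0 by apply/matrixP => i j; rewrite !mxE rmorph0.
move=> a u v Pu Pv.
have -> : hadj (a *: u + v) = a^* *: hadj u + hadj v.
  by apply/matrixP => i j; rewrite !mxE rmorphD rmorphM.
exact: PD.
Qed.

Lemma qle_trans (X Y : qset) (A B D : qrel C X Y) : qle A B -> qle B D -> qle A D.
Proof. by move=> AB BD x y m /AB /BD. Qed.

Lemma qle_antisym (X Y : qset) (A B : qrel C X Y) : qle A B -> qle B A -> A = B.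
Proof.
move=> AB BA; do 3 apply: functional_extensionality_dep => ?.
by apply: propositional_extensionality; split; [exact: AB | exact: BA].
Qed.

Lemma qcomp_monol (X Y Z : qset) (S S' : qrel C Y Z) (R : qrel C X Y) :
  qle S S' -> qle (qcomp S R) (qcomp S' R).
Proof.
move=> SS' x z m [n [y [c [r [s [RS ->]]]]]].
by exists n, y, c, r, s; split => // i; have [? ?] := RS i; split; auto.
Qed.

Lemma qcomp_monor (X Y Z : qset) (S : qrel C Y Z) (R R' : qrel C X Y) :
  qle R R' -> qle (qcomp S R) (qcomp S R').
Proof.
move=> RR' x z m [n [y [c [r [s [RS ->]]]]]].
by exists n, y, c, r, s; split => // i; have [? ?] := RS i; split; auto.
Qed.

Lemma qcomp_mono (X Y Z : qset) (S S' : qrel C Y Z) (R R' : qrel C X Y) :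
  qle S S' -> qle R R' -> qle (qcomp S R) (qcomp S' R').
Proof. by move=> SS' RR'; apply: qle_trans (qcomp_monol SS') (qcomp_monor RR'). Qed.

Lemma qcomp_assocl (W X Y Z : qset) (A : qrel C Y Z) (B : qrel C X Y) (D : qrel C W X) :
  qle (qcomp A (qcomp B D)) (qcomp (qcomp A B) D).
Proof.
move=> w z m; apply: qcomp_ind; first exact: qcomp_is_subspace.
move=> y r a Dr Aa; move: r Dr.
apply: qcomp_ind; first by apply: subspace_mull; exact: qcomp_is_subspace.
move=> x d b Dd Bb; rewrite mulmxA; apply: qcomp_mul Dd _.
exact: qcomp_mul Bb Aa.
Qed.
Arguments qcomp_assocl {W X Y Z} A B D.

Lemma qcomp_assocr (W X Y Z : qset) (A : qrel C Y Z) (B : qrel C X Y) (D : qrel C W X) :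
  qle (qcomp (qcomp A B) D) (qcomp A (qcomp B D)).
Proof.
move=> w z m; apply: qcomp_ind; first exact: qcomp_is_subspace.
move=> x d s Dd; move: s.
apply: qcomp_ind; first by apply: subspace_mulr; exact: qcomp_is_subspace.
move=> y b a Bb Aa; rewrite -mulmxA; apply: qcomp_mul _ Aa.
exact: qcomp_mul Dd Bb.
Qed.
Arguments qcomp_assocr {W X Y Z} A B D.

Lemma qcomp_qid_r (X Y : qset) (S : qrel C X Y) :
  is_qrel S -> qle (qcomp S (qid (X:=X))) S.
Proof.
move=> subS x y; apply: qcomp_ind; first exact: subS.
move=> x' r s [diag offdiag] Ss; case: (classic (x = x')) => [exx'|nexx'].
  subst x'; have [c ->] := diag erefl; rewrite pid_mx_1 -scalemxAr mulmx1.
  by rewrite -[_ *: s]addr0; apply: (subS _ _).2 => //; exact: (subS _ _).1.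
by rewrite offdiag // mulmx0; exact: (subS _ _).1.
Qed.

Lemma qcomp_qid_l (X Y : qset) (S : qrel C X Y) :
  is_qrel S -> qle (qcomp (qid (X:=Y)) S) S.
Proof.
move=> subS x y; apply: qcomp_ind; first exact: subS.
move=> y' r s Sr [diag offdiag]; case: (classic (y' = y)) => [eyy'|neyy'].
  subst y'; have [c ->] := diag erefl; rewrite pid_mx_1 -scalemxAl mul1mx.
  by rewrite -[_ *: r]addr0; apply: (subS _ _).2 => //; exact: (subS _ _).1.
by rewrite offdiag // mul0mx; exact: (subS _ _).1.
Qed.

Lemma qid_qcomp_r (X Y : qset) (S : qrel C X Y) : qle S (qcomp S (qid (X:=X))).
Proof.
move=> x y m Sm; rewrite -[m]mulmx1 -(pid_mx_1 _ (qdim x)).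
by apply: qcomp_mul Sm; split => // _; exists 1; rewrite scale1r.
Qed.
Arguments qid_qcomp_r {X Y} S.

Lemma qid_qcomp_l (X Y : qset) (S : qrel C X Y) : qle S (qcomp (qid (X:=Y)) S).
Proof.
move=> x y m Sm; rewrite -[m]mul1mx -(pid_mx_1 _ (qdim y)).
by apply: qcomp_mul Sm _; split => // _; exists 1; rewrite scale1r.
Qed.
Arguments qid_qcomp_l {X Y} S.

Lemma qcomp_qadj (X Y : qset) (F G : qrel C X Y) :
  qle (qcomp G (qadj F)) (qadj (qcomp F (qadj G))).
Proof.
move=> y y' m Gm; exists (hadj m); split; last by rewrite hadjK.
move: m Gm; apply: qcomp_ind; first by apply: subspace_hadj; exact: qcomp_is_subspace.
move=> x r g [f [Ff ->]] Gg; rewrite hadjM hadjK.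
by apply: qcomp_mul Ff; exists g.
Qed.

Lemma hom_le_refl (X Y : qset) (S : qrel C Y Y) (F : qrel C X Y) :
  qle (qid (X:=Y)) S -> hom_le S F F.
Proof. by move=> IS; apply: qle_trans (qid_qcomp_l F) (qcomp_monol IS). Qed.

Lemma hom_le_trans (X Y : qset) (S : qrel C Y Y) (F G H : qrel C X Y) :
  qle (qcomp S S) S -> hom_le S F G -> hom_le S G H -> hom_le S F H.
Proof.
move=> SS FG GH; apply: qle_trans GH _.
apply: qle_trans (qcomp_monor FG) _.
exact: qle_trans (qcomp_assocl _ _ _) (qcomp_monol SS).
Qed.

(* Basic estimate behind antisymmetry: if G <= S o F and F o F^+ <= I, then
   G o F^+ <= S o F o F^+ <= S. *)
Lemma hom_le_qadj (X Y : qset) (S : qrel C Y Y) (F G : qrel C X Y) :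
  is_qrel S -> qle (qcomp F (qadj F)) (qid (X:=Y)) -> hom_le S F G ->
  qle (qcomp G (qadj F)) S.
Proof.
move=> subS FFI FG; apply: qle_trans (qcomp_monol FG) _.
apply: qle_trans (qcomp_assocr _ _ _) _.
exact: qle_trans (qcomp_monor FFI) (qcomp_qid_r subS).
Qed.

Lemma hom_le_antisym_half (X Y : qset) (S : qrel C Y Y) (F G : qrel C X Y) :
  is_qposet S -> is_qfun F -> is_qfun G ->
  hom_le S F G -> hom_le S G F -> qle G F.
Proof.
move=> [subS _ _ Santi] [subF FFI IFF] [_ GGI _] FG GF.
have GFI : qle (qcomp G (qadj F)) (qid (X:=Y)).
  move=> y y' m GFm; apply: Santi; split; first exact: (hom_le_qadj subS FFI FG).
  have [r [FGr ->]] := qcomp_qadj GFm.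
  by exists r; split => //; exact: (hom_le_qadj subS GGI GF).
apply: qle_trans (qid_qcomp_r G) _.
apply: qle_trans (qcomp_monor IFF) _.
apply: qle_trans (qcomp_assocl _ _ _) _.
exact: qle_trans (qcomp_monol GFI) (qcomp_qid_l subF).
Qed.

(* Composition respects the order, using only that G is monotone and T
   transitive: G' o F' <= (T o G) o (S o F) <= T o (T o G) o F <= T o (G o F). *)
Lemma hom_le_qcomp (X Y Z : qset) (S : qrel C Y Y) (T : qrel C Z Z)
  (F F' : qrel C X Y) (G G' : qrel C Y Z) :
  qle (qcomp T T) T -> qle (qcomp G S) (qcomp T G) ->
  hom_le S F F' -> hom_le T G G' -> hom_le T (qcomp G F) (qcomp G' F').
Proof.
move=> TT GS FF' GG'; apply: qle_trans (qcomp_mono GG' FF') _.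
apply: qle_trans (qcomp_assocr _ _ _) _.
apply: qle_trans (qcomp_monor (qcomp_assocl _ _ _)) _.
apply: qle_trans (qcomp_monor (qcomp_monol GS)) _.
apply: qle_trans (qcomp_monor (qcomp_assocr _ _ _)) _.
apply: qle_trans (qcomp_assocl _ _ _) _.
exact: qcomp_monol.
Qed.

End QuantumRelations.

Theorem mainTheorem2 (C : numClosedFieldType) (X Y Z : qset)
  (R : qrel C X X) (S : qrel C Y Y) (T : qrel C Z Z) :
  is_qposet R -> is_qposet S -> is_qposet T ->
  (* reflexivity *)
  (forall F, is_monotone R S F -> hom_le S F F) /\
  (* antisymmetry *)
  (forall F G, is_monotone R S F -> is_monotone R S G ->
     hom_le S F G -> hom_le S G F -> F = G) /\
  (* transitivity *)
  (forall F G H, is_monotone R S F -> is_monotone R S G -> is_monotone R S H ->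
     hom_le S F G -> hom_le S G H -> hom_le S F H) /\
  (* composition is monotone in both arguments *)
  (forall F F' (G G' : qrel C Y Z),
     is_monotone R S F -> is_monotone R S F' ->
     is_monotone S T G -> is_monotone S T G' ->
     hom_le S F F' -> hom_le T G G' ->
     hom_le T (qcomp G F) (qcomp G' F')).
Proof.
move=> _ posS [_ _ TT _]; have [_ IS SS _] := posS.
split; first by move=> F _; exact: hom_le_refl.
split.
  move=> F G [funF _] [funG _] FG GF.
  by apply: qle_antisym; [exact: hom_le_antisym_half GF FG
                         | exact: hom_le_antisym_half FG GF].
split; first by move=> F G H _ _ _; exact: hom_le_trans.
by move=> F F' G G' _ _ [_ monG] _; exact: hom_le_qcomp.
Qed.
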